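(* Let $\mathcal{L}$ be a triangulation with branching structure of a closed 3-manifold $\mathcal{M}^3$, carrying three copies of the $\mathbb{Z}_2$ toric code as described in the context. Let $\alpha_2$ be a 2-cycle of $\mathcal{L}$ (a set of triangles forming a $\mathbb{Z}_2$-cycle) and let $i\neq j\in\{1,2,3\}$. Define $$U'_{i,j}(\alpha_2)=\prod_{[v_0v_1v_2]\in\alpha_2}\mathrm{CZ}\big(q^{(i)}_{[v_0v_1]},q^{(j)}_{[v_1v_2]}\big)=(-1)^{\int_{\alpha_2}a^{(i)}\cup a^{(j)}}.$$ Then $U'_{i,j}(\alpha_2)$ preserves the code space, and on it $$U'_{i,j}(\alpha_2)=\prod_{\beta^1,\gamma^1\in B^1}\overline{\mathrm{CZ}}\big[(\beta^1;i),(\gamma^1;j)\big]^{\int_{\mathcal{M}^3}\alpha^1\cup\beta^1\cup\gamma^1},$$ where $\alpha^1\in H^1(\mathcal{M}^3;\mathbb{Z}_2)$ is the Poincaré dual of $[\alpha_2]$.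
   Context: Toric code copy $k$: one qubit $q^{(k)}_e$ per edge; $X$-stabilizers $\prod_{e\ni v}X^{(k)}_e$ on vertices; $Z$-stabilizers $\prod_{e\subset f}Z^{(k)}_e$ on triangles. The $\{0,1\}$-valued operator cochain $a^{(k)}$ satisfies $(-1)^{a^{(k)}(e)}=Z^{(k)}_e$; cup products on ordered simplices are $(\alpha\cup\beta)([v_0v_1v_2])=\alpha([v_0v_1])\beta([v_1v_2])$, with $v_0\prec v_1\prec v_2$ from the branching structure. On the code space $da^{(k)}=0$. Fix a basis $B^1$ of $H^1(\mathcal{M}^3;\mathbb{Z}_2)$; writing $[a^{(k)}]=\sum_{\beta}m^{(k)}_\beta\beta^1$, the logical qubit $(\beta^1;k)$ has computational basis value $m^{(k)}_\beta\in\{0,1\}$, and $\overline{\mathrm{CZ}}[(\beta^1;i),(\gamma^1;j)]$ acts as $(-1)^{m^{(i)}_\beta m^{(j)}_\gamma}$. *)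

From HB Require Import structures.
From mathcomp Require Import all_boot all_order all_algebra all_field.
Set Implicit Arguments. Unset Strict Implicit. Unset Printing Implicit Defensive.
Import GRing.Theory Num.Theory.

Section Defs.
Variable V : finType.
Implicit Types (K L : {set {set V}}) (br : rel V).

Definition simplicial_complex K : bool :=
  [forall s in K, (s != set0) &&
     [forall t : {set V}, ((t \subset s) && (t != set0)) ==> (t \in K)]].

Definition all_vertices K : bool := [forall v : V, [set v] \in K].

Definition nsimplices K (k : nat) : {set {set V}} := [set s in K | #|s| == k.+1].

Definition pure K (d : nat) : bool :=
  [forall s in K, (#|s| <= d.+1) && [exists t in K, (#|t| == d.+1) && (s \subset t)]].

Definition link K (v : V) : {set {set V}} :=
  [set s in K | (v \notin s) && ((v |: s) \in K)].

Definition skel_rel K : rel V := fun x y => [set x; y] \in K.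
Definition connected_cx K : bool :=
  [forall x, forall y, (([set x] \in K) && ([set y] \in K)) ==> connect (skel_rel K) x y].

(* closed (triangulated) surface: pure 2-dim, every edge in exactly two
   triangles, every vertex link connected (hence a circle) *)
Definition closed_surface L : bool :=
  [&& pure L 2,
      [forall e in nsimplices L 1,
         #|[set t in nsimplices L 2 | e \subset t]| == 2] &
      [forall w : V, ([set w] \in L) ==> connected_cx (link L w)]].

(* triangulated 2-sphere: connected closed surface with Euler characteristic 2 *)
Definition sphere2 L : bool :=
  [&& closed_surface L, connected_cx L &
      #|nsimplices L 0| + #|nsimplices L 2| == #|nsimplices L 1| + 2].

(* triangulation of a closed 3-manifold (combinatorial: vertex links are 2-spheres;
   in dimension 3 every triangulation is combinatorial) *)
Definition closed_3manifold K : bool :=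
  [&& simplicial_complex K, all_vertices K, pure K 3 &
      [forall v : V, sphere2 (link K v)]].

Definition branching K br : Prop :=
  (forall u v, u != v -> [set u; v] \in K -> br u v != br v u) /\
  (forall u v w, [set u; v; w] \in K -> #|[set u; v; w]| = 3 ->
      ~~ [&& br u v, br v w & br w u]).

(* ordered triangles [v0 v1 v2] and tetrahedra [v0 v1 v2 v3], v0 < v1 < ... *)
Definition otri K br (x : V * V * V) : bool :=
  let '(v0, v1, v2) := x in
  [&& [set v0; v1; v2] \in K, #|[set v0; v1; v2]| == 3, br v0 v1 & br v1 v2].
Definition otet K br (x : V * V * V * V) : bool :=
  let '(v0, v1, v2, v3) := x in
  [&& [set v0; v1; v2; v3] \in K, #|[set v0; v1; v2; v3]| == 4,
      br v0 v1, br v1 v2 & br v2 v3].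

(* ---------- Z2 cochains (values on edges = 2-element simplices) ---------- *)
Definition cochain1 := {set V} -> bool.

Definition d0 (l : V -> bool) : cochain1 := fun e => \big[addb/false]_(v in e) l v.
Definition d1 (a : cochain1) (t : {set V}) : bool :=
  \big[addb/false]_(e : {set V} | (e \subset t) && (#|e| == 2)) a e.

Definition cocycle1 K (a : cochain1) : Prop :=
  forall t, t \in K -> #|t| = 3 -> d1 a t = false.

Definition cohomologous K (a b : cochain1) : bool :=
  [exists l : {ffun V -> bool},
     [forall e : {set V}, ((e \in K) && (#|e| == 2)) ==> (a e (+) b e == d0 l e)]].

Definition lincomb n (beta : 'I_n -> cochain1) (m : {ffun 'I_n -> bool}) : cochain1 :=
  fun e => \big[addb/false]_(l | m l) beta l e.

(* the classes of beta_0..beta_{n-1} form a basis B^1 of H^1(M;Z2) *)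
Definition cohom_basis K n (beta : 'I_n -> cochain1) : Prop :=
  [/\ forall l, cocycle1 K (beta l),
      forall a, cocycle1 K a -> exists m, cohomologous K a (lincomb beta m) &
      forall m, cohomologous K (lincomb beta m) (fun _ => false) -> forall l, m l = false].

Definition coord K n (beta : 'I_n -> cochain1) (a : cochain1) : {ffun 'I_n -> bool} :=
  odflt [ffun=> false] [pick m | cohomologous K a (lincomb beta m)].

Definition cycle2 K (al2 : {set {set V}}) : Prop :=
  (forall t, t \in al2 -> (t \in K) && (#|t| == 3)) /\
  (forall e, e \in K -> #|e| = 2 -> ~~ odd #|[set t in al2 | e \subset t]|).

(* cap product with the Z2 fundamental class: (a ∩ [M]) ([v1v2v3]) =
   sum over tetrahedra [v0v1v2v3] of a([v0v1]) *)
Definition capM K br (a : cochain1) (t : {set V}) : bool :=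
  \big[addb/false]_(x : V * V * V * V)
     (let '(v0, v1, v2, v3) := x in
      [&& otet K br x, [set v1; v2; v3] == t & a [set v0; v1]]).

Definition bd3 K (c : {set {set V}}) (t : {set V}) : bool :=
  odd #|[set s in c | [&& s \in K, #|s| == 4 & t \subset s]]|.

(* a1 is a cocycle representing the Poincare dual of [al2]:
   a1 ∩ [M] is homologous to al2 *)
Definition poincare_dual K br (a1 : cochain1) (al2 : {set {set V}}) : Prop :=
  cocycle1 K a1 /\
  exists c : {set {set V}}, forall t, t \in K -> #|t| = 3 ->
    (t \in al2) (+) capM K br a1 t = bd3 K c t.

(* \int_M a ∪ b ∪ c *)
Definition int3 K br (a b c : cochain1) : bool :=
  \big[addb/false]_(x : V * V * V * V)
     (let '(v0, v1, v2, v3) := x in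
      [&& otet K br x, a [set v0; v1], b [set v1; v2] & c [set v2; v3]]).

Definition edge K := {e : {set V} | (e \in K) && (#|e| == 2)}.
(* computational basis configuration: a^(k)(e) for copy k and edge e *)
Definition config K := {ffun 'I_3 -> {ffun edge K -> bool}}.
Definition state K := config K -> algC.
Definition op K := state K -> state K.

Definition cv K (c : {ffun edge K -> bool}) : cochain1 :=
  fun s => match (insub s : option (edge K)) with Some e => c e | None => false end.

Definition sgn (b : bool) : algC := ((-1) ^+ b)%R.

Definition flipv K (k : 'I_3) (v : V) (a : config K) : config K :=
  [ffun k' => if k' == k then [ffun e => a k' e (+) (v \in val e)] else a k'].

(* X-stabilizer prod_{e ∋ v} X^(k)_e  and  Z-stabilizer prod_{e ⊂ t} Z^(k)_e *)
Definition Xstab K (k : 'I_3) (v : V) : op K := fun psi a => psi (flipv k v a).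
Definition Zstab K (k : 'I_3) (t : {set V}) : op K :=
  fun psi a => (sgn (d1 (cv (a k)) t) * psi a)%R.

Definition code_space K (psi : state K) : Prop :=
  forall k : 'I_3,
    (forall v, Xstab k v psi =1 psi) /\
    (forall t, t \in K -> #|t| = 3 -> Zstab k t psi =1 psi).

Definition CZ K (q q' : 'I_3 * {set V}) : op K :=
  fun psi a => (sgn (cv (a q.1) q.2 && cv (a q'.1) q'.2) * psi a)%R.

Definition opprod K (T : Type) (s : seq T) (F : T -> op K) : op K :=
  foldr (fun x f => fun psi => F x (f psi)) id s.

Definition Uprime K br (al2 : {set {set V}}) (i j : 'I_3) : op K :=
  opprod [seq x <- enum {: V * V * V} |
            otri K br x && (let '(v0, v1, v2) := x in [set v0; v1; v2] \in al2)]
         (fun x => let '(v0, v1, v2) := x in @CZ K (i, [set v0; v1]) (j, [set v1; v2])).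

Definition CZbar K n (beta : 'I_n -> cochain1) (i j : 'I_3) (l l' : 'I_n) : op K :=
  fun psi a => (sgn (coord K beta (cv (a i)) l && coord K beta (cv (a j)) l') * psi a)%R.

Definition logical_rhs K br n (beta : 'I_n -> cochain1) (a1 : cochain1) (i j : 'I_3) : op K :=
  opprod (enum {: 'I_n * 'I_n})
    (fun p => if int3 K br a1 (beta p.1) (beta p.2) then @CZbar K n beta i j p.1 p.2 else id).

End Defs.

From Pilot Require Import Defs.
From HB Require Import structures.
From mathcomp Require Import all_boot all_order all_algebra all_field.
Set Implicit Arguments. Unset Strict Implicit. Unset Printing Implicit Defensive.
Import GRing.Theory Num.Theory.

(* U'_{i,j}(al2) is diagonal in the computational basis, with phase
   (-1)^(\int_al2 a^(i) \cup a^(j)).  On the code space the a^(k) are cocycles, and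
   since al2 is a cycle, \int_al2 b \cup c depends only on the cohomology classes of
   the cocycles b and c: replacing b by b + dl changes the integrand by d(l \cup c).
   An X-stabilizer changes a^(k) by the coboundary of a vertex indicator, so U'
   commutes with the stabilizers and preserves the code space.  Finally al2 and
   a1 \cap [M] differ by a boundary dC, on which the cocycle b \cup c integrates to
   zero, so the phase is \int_M a1 \cup b \cup c; this is bilinear in [b] and [c],
   and expanding [a^(i)] and [a^(j)] in the basis B^1 gives the product of logical
   CZ gates. *)

Lemma big_addb_const (I : finType) (P : pred I) (b : bool) :
  \big[addb/false]_(i | P i) b = odd #|[set i | P i]| && b.
Proof.
rewrite big_const cardsE; elim: #|_| => //= n ->.
by case: b; case: (odd n).
Qed.

Section SmallSets.
Variable V : finType.
Implicit Types (a b c d u w z : V) (A B : {set V}).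

Lemma card_set3 a b c : (#|[set a; b; c]| == 3) = uniq [:: a; b; c].
Proof.
have -> : [set a; b; c] = [set x in [:: a; b; c]] by apply/setP=> x; rewrite !inE !orbA.
by rewrite cardsE; apply: sameP eqP card_uniqP.
Qed.

Lemma card_set4 a b c d : (#|[set a; b; c; d]| == 4) = uniq [:: a; b; c; d].
Proof.
have -> : [set a; b; c; d] = [set x in [:: a; b; c; d]].
  by apply/setP=> x; rewrite !inE !orbA.
by rewrite cardsE; apply: sameP eqP card_uniqP.
Qed.

Lemma eq_setD1 A B z : z \in A -> z \notin B -> B \subset A -> #|A| = #|B|.+1 -> B = A :\ z.
Proof.
move=> zA zB BA cardA; apply/eqP; rewrite eqEcard subsetD1 BA zB.
by move/eqP: cardA; rewrite (cardsD1 z A) zA add1n eqSS => /eqP ->; rewrite leqnn.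
Qed.

Lemma d0_set2 (l : V -> bool) u w : u != w -> d0 l [set u; w] = l u (+) l w.
Proof. by move=> uw; rewrite /d0 big_setU1 ?big_set1 // inE. Qed.

Lemma uniq3 a b c : uniq [:: a; b; c] = [&& a != b, a != c & b != c].
Proof. by rewrite /= !inE negb_or andbT andbA. Qed.

Lemma set3_edges a b c : uniq [:: a; b; c] -> forall e : {set V},
  (e \subset [set a; b; c]) && (#|e| == 2) = (e \in [:: [set b; c]; [set a; c]; [set a; b]]).
Proof.
move=> abc e; set t := [set a; b; c].
have t3 : #|t| = 3 by apply/eqP; rewrite card_set3.
move: abc; rewrite uniq3 => /and3P[ab ac bc].
have [ta tb tc] : [/\ a \in t, b \in t & c \in t] by rewrite !inE !eqxx !orbT.
have pairE x y z : x \in t -> y \in t -> z \in t -> x != y -> x != z -> y != z ->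
    [set y; z] = t :\ x.
  move=> xt yt zt xy xz yz; apply: eq_setD1; rewrite ?cards2 ?yz ?t3 //.
    by rewrite !inE negb_or xy xz.
  by apply/subsetP=> v /set2P[] ->.
apply/andP/idP => [[et /eqP e2]|].
  have [x xt xe] : exists2 x, x \in t & x \notin e.
    by apply/subsetPn/negP => /subset_leq_card; rewrite e2 t3.
  have -> : e = t :\ x by apply: eq_setD1; rewrite ?e2.
  move: xt; rewrite !inE -orbA => /or3P[] /eqP ->.
  - by rewrite -(pairE a b c) // eqxx.
  - by rewrite -(pairE b a c) ?eqxx ?orbT // eq_sym.
  - by rewrite -(pairE c a b) ?eqxx ?orbT // eq_sym.
by rewrite !inE => /or3P[] /eqP ->; rewrite cards2 ?ab ?ac ?bc; split=> //;
  apply/subsetP=> v /set2P[] ->.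
Qed.

Lemma d1_set3 (f : cochain1 V) a b c : uniq [:: a; b; c] ->
  d1 f [set a; b; c] = f [set a; b] (+) f [set a; c] (+) f [set b; c].
Proof.
move=> abc; rewrite /d1 (eq_bigl _ _ (set3_edges abc)) -big_uniq /=.
  by rewrite !big_cons big_nil addbF addbC (addbC (f [set a; c])).
move: abc; rewrite uniq3 => /and3P[ab ac bc].
have pair_neq x y (s : {set V}) : (x \notin s) || (y \notin s) -> [set x; y] != s.
  by apply: contraTneq => <-; rewrite !inE !eqxx orbT.
by rewrite !inE !negb_or !pair_neq // ?inE ?negb_or
  ?(eq_sym c a) ?(eq_sym c b) ?(eq_sym b a) ?ab ?ac ?bc ?andbT ?orbT.
Qed.

End SmallSets.

Definition triangle_of (V : finType) (x : V * V * V) : {set V} :=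
  let '(a, b, c) := x in [set a; b; c].

Section BranchedComplex.
Variables (V : finType) (K : {set {set V}}) (br : rel V).
Hypotheses (scK : simplicial_complex K) (brK : branching K br).
Implicit Types (s t : {set V}) (u v w : V).

Lemma face_in_complex s t : s \in K -> t \subset s -> t != set0 -> t \in K.
Proof.
move=> sK ts t0; move/forallP: scK => /(_ s); rewrite sK => /andP[_ /forallP/(_ t)].
by rewrite ts t0.
Qed.

Lemma pair_in_complex s u v : s \in K -> u \in s -> v \in s -> [set u; v] \in K.
Proof.
move=> sK us vs; apply: face_in_complex sK _ _; first by apply/subsetP=> z /set2P[] ->.
by apply/set0Pn; exists u; rewrite !inE eqxx.
Qed.

Lemma br_antisym u v : u != v -> [set u; v] \in K -> br v u = ~~ br u v.
Proof. by move=> uv uvK; have := brK.1 u v uv uvK; case: (br u v); case: (br v u). Qed.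

Lemma sorted_vertices s : s \in K ->
  exists L : seq V, [/\ uniq L, L =i s, size L = #|s| & sorted br L].
Proof.
move=> sK; pose r u v := if [&& u \in s, v \in s & u != v] then br u v else true.
have r_total : total r.
  move=> u v; rewrite /r; case: (boolP (u \in s)) => //= us.
  case: (boolP (v \in s)) => //= vs; case: eqVneq => //= uv.
  by rewrite (br_antisym uv) ?orbN // (pair_in_complex sK us vs).
pose L := sort r (enum s).
have uL : uniq L by rewrite sort_uniq enum_uniq.
have memL : L =i s by move=> z; rewrite mem_sort mem_enum.
exists L; split=> //; first by rewrite size_sort cardE.
have : sorted r L := sort_sorted r_total _.
have : {subset L <= s} by move=> z; rewrite memL.
elim: L uL {memL} => // x [|y L] IH //= /andP[xL uL] Ls /andP[rxy pyL].
have Ls' : {subset y :: L <= s} by move=> z zL; apply: Ls; rewrite inE zL orbT.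
apply/andP; split; last exact: IH.
move: rxy; rewrite /r !Ls ?inE ?eqxx ?orbT //=.
by have -> : x != y by apply: contra xL => /eqP ->; rewrite inE eqxx.
Qed.

Lemma otri_exists t : t \in K -> #|t| = 3 -> exists2 x, otri K br x & triangle_of x = t.
Proof.
move=> tK t3; have [[|a [|b [|c [|d L]]]] [uL memL sizeL sortedL]] := sorted_vertices tK;
  rewrite t3 // in sizeL.
have abc : [set a; b; c] = t by apply/setP=> z; rewrite -memL !inE orbA.
move: uL sortedL => /= uL /and3P[ab bc _].
by exists (a, b, c); rewrite //= abc tK t3 eqxx ab bc.
Qed.

Lemma otet_exists s : s \in K -> #|s| = 4 ->
  exists2 y, otet K br y & let '(a, b, c, d) := y in [set a; b; c; d] = s.
Proof.
move=> sK s4; have [[|a [|b [|c [|d [|e L]]]]] [uL memL sizeL sortedL]] := sorted_vertices sK;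
  rewrite s4 // in sizeL.
have abcd : [set a; b; c; d] = s by apply/setP=> z; rewrite -memL !inE !orbA.
move: uL sortedL => /= uL /and4P[ab bc cd _].
by exists (a, b, c, d); rewrite //= abcd sK s4 eqxx ab bc cd.
Qed.

Lemma otri_facts a b c : otri K br (a, b, c) ->
  [/\ [set a; b; c] \in K, uniq [:: a; b; c],
      [&& br a b, br b c & br a c] & [&& ~~ br b a, ~~ br c b & ~~ br c a]].
Proof.
case/and4P=> tK t3 ab bc; have abc := t3; rewrite card_set3 in abc.
have ca : ~~ br c a by move: (brK.2 a b c tK (eqP t3)); rewrite ab bc.
have edgeK u v : u \in [set a; b; c] -> v \in [set a; b; c] -> [set u; v] \in K.
  exact: pair_in_complex.
have /and3P[neab neac nebc] : [&& a != b, a != c & b != c] by rewrite -uniq3.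
have ac : br a c.
  by rewrite -[br a c]negbK -(br_antisym neac) // edgeK ?inE ?eqxx ?orbT.
split=> //; first by rewrite ab bc ac.
by rewrite (br_antisym neab) 1?(br_antisym nebc) 1?(br_antisym neac) ?ab ?bc ?ac
  ?edgeK ?inE ?eqxx ?orbT.
Qed.

Lemma otri_edges a b c : otri K br (a, b, c) ->
  [/\ [set a; b] \in K, [set a; c] \in K & [set b; c] \in K].
Proof.
by case/otri_facts=> tK _ _ _; split; apply: pair_in_complex tK _ _; rewrite !inE !eqxx ?orbT.
Qed.

Lemma otri_inj x x' : otri K br x -> otri K br x' -> triangle_of x = triangle_of x' -> x = x'.
Proof.
case: x x' => [[a b] c] [[a' b'] c'] /otri_facts[_ _ _ /and3P[ba cb ca]].
case/otri_facts=> _ uniq' /and3P[ab' bc' ac'] _ /= E.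
have : [/\ a' \in [set a; b; c], b' \in [set a; b; c] & c' \in [set a; b; c]].
  by rewrite E !inE !eqxx !orbT.
rewrite !inE -!orbA; move: uniq'; rewrite uniq3 => /and3P[n1 n2 n3].
case=> /or3P[] /eqP ea /or3P[] /eqP eb /or3P[] /eqP ec; subst a' b' c' => //;
  by move: n1 n2 n3 ab' bc' ac'; rewrite ?eqxx ?(negbTE ba) ?(negbTE cb) ?(negbTE ca).
Qed.

Lemma big_otri (R : Type) (idx : R) (op : Monoid.com_law idx)
    (P : pred {set V}) (F : {set V} -> R) :
  \big[op/idx]_(x | otri K br x && P (triangle_of x)) F (triangle_of x) =
  \big[op/idx]_(t | [&& P t, t \in K & #|t| == 3]) F t.
Proof.
rewrite (partition_big (@triangle_of V) (fun t => [&& P t, t \in K & #|t| == 3])); last first.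
  by move=> [[a b] c] /andP[/[dup] /otri_facts[tK _ _ _] /and4P[_ -> _ _] ->]; rewrite tK.
apply: eq_bigr => t /and3P[Pt tK /eqP t3].
have [x0 ox0 tx0] := otri_exists tK t3.
rewrite (big_pred1 x0) ?tx0 // => x /=; apply/idP/eqP => [/andP[/andP[ox _] /eqP tx]|->].
  by apply: otri_inj; rewrite ?tx.
by rewrite ox0 tx0 Pt eqxx.
Qed.

Lemma otet_faces y0 y1 y2 y3 : otet K br (y0, y1, y2, y3) ->
  [/\ otri K br (y1, y2, y3), otri K br (y0, y2, y3), otri K br (y0, y1, y3)
    & otri K br (y0, y1, y2)].
Proof.
case/and5P=> sK s4 b01 b12 b23; rewrite card_set4 /= !inE !negb_or andbT in s4.
case/and3P: s4 => /and3P[d01 d02 d03] /andP[d12 d13] d23.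
have triK a b c : a \in [set y0; y1; y2; y3] -> b \in [set y0; y1; y2; y3] ->
    c \in [set y0; y1; y2; y3] -> [set a; b; c] \in K.
  move=> ha hb hc; apply: face_in_complex sK _ _; last by apply/set0Pn; exists a; rewrite !inE eqxx.
  by apply/subsetP=> z /setUP[/setUP[]|] /set1P ->.
have otriE a b c : a \in [set y0; y1; y2; y3] -> b \in [set y0; y1; y2; y3] ->
    c \in [set y0; y1; y2; y3] -> uniq [:: a; b; c] -> br a b -> br b c -> otri K br (a, b, c).
  by move=> ha hb hc abc ab bc; rewrite /= triK // card_set3 abc ab bc.
have o012 : otri K br (y0, y1, y2).
  by apply: otriE; rewrite ?inE ?eqxx ?orbT //= !inE !negb_or d01 d02 d12.
have o123 : otri K br (y1, y2, y3).
  by apply: otriE; rewrite ?inE ?eqxx ?orbT //= !inE !negb_or d12 d13 d23.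
have [_ _ /and3P[_ _ b02] _] := otri_facts o012.
have [_ _ /and3P[_ _ b13] _] := otri_facts o123.
split=> //; apply: otriE; rewrite ?inE ?eqxx ?orbT //= !inE !negb_or.
  by rewrite d02 d03 d23.
by rewrite d01 d03 d13.
Qed.

Lemma otri_sub_otet y0 y1 y2 y3 x : otet K br (y0, y1, y2, y3) ->
  otri K br x && (triangle_of x \subset [set y0; y1; y2; y3]) =
  (x \in [:: (y1, y2, y3); (y0, y2, y3); (y0, y1, y3); (y0, y1, y2)]).
Proof.
move=> oy; have [o0 o1 o2 o3] := otet_faces oy.
set s := [set y0; y1; y2; y3].
have s4 : #|s| = 4 by case/and5P: oy => _ /eqP.
have faces_sub : [/\ [set y1; y2; y3] \subset s, [set y0; y2; y3] \subset s,
                     [set y0; y1; y3] \subset s & [set y0; y1; y2] \subset s].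
  by split; apply/subsetP=> v; rewrite !inE -!orbA => /or3P[] ->; rewrite ?orbT.
apply/andP/idP => [[ox xs]|]; last first.
  by case: faces_sub; rewrite !inE => ? ? ? ? /or4P[] /eqP->.
have [z zs zx] : exists2 z, z \in s & z \notin triangle_of x.
  apply/subsetPn/negP => /subset_leq_card; rewrite s4.
  by case: x ox {xs} => [[a b] c] /and4P[_ /eqP-> _ _].
have triangle_setD1 f : otri K br f -> triangle_of f \subset s -> z \notin triangle_of f ->
    triangle_of f = s :\ z.
  case: f => [[a b] c] /and4P[_ /eqP f3 _ _] fs zf.
  by apply: eq_setD1 zs zf fs _; rewrite s4 f3.
have faceP f : otri K br f -> triangle_of f \subset s -> z \notin triangle_of f -> x = f.
  move=> fo fs zf; apply: (otri_inj ox fo).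
  by rewrite (triangle_setD1 x ox xs zx) (triangle_setD1 f fo fs zf).
have : uniq [:: y0; y1; y2; y3] by case/and5P: oy => _; rewrite card_set4.
rewrite /= !inE !negb_or andbT => /and3P[/and3P[d01 d02 d03] /andP[d12 d13] d23].
case: faces_sub => s0 s1 s2 s3.
move: zs; rewrite !inE -!orbA => /or4P[] /eqP ez; subst z.
- have -> : x = (y1, y2, y3) by apply: faceP o0 s0 _; rewrite /= !inE !negb_or d01 d02 d03.
  by rewrite eqxx.
- have -> : x = (y0, y2, y3).
    by apply: faceP o1 s1 _; rewrite /= !inE !negb_or (eq_sym y1) d01 d12 d13.
  by rewrite eqxx orbT.
- have -> : x = (y0, y1, y3).
    by apply: faceP o2 s2 _; rewrite /= !inE !negb_or (eq_sym y2 y0) (eq_sym y2 y1) d02 d12 d23.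
  by rewrite eqxx !orbT.
- have -> : x = (y0, y1, y2).
    by apply: faceP o3 s3 _; rewrite /= !inE !negb_or !(eq_sym y3 _) d03 d13 d23.
  by rewrite eqxx !orbT.
Qed.

End BranchedComplex.

Section Cochains.
Variables (V : finType) (K : {set {set V}}) (br : rel V).
Hypotheses (scK : simplicial_complex K) (brK : branching K br).
Implicit Types (s t : {set V}) (u v w : V) (a b c f : cochain1 V).

Lemma cocycle_otri c x0 x1 x2 : cocycle1 K c -> otri K br (x0, x1, x2) ->
  c [set x0; x1] (+) c [set x0; x2] (+) c [set x1; x2] = false.
Proof.
move=> cc /(otri_facts scK brK)[tK x012 _ _].
by rewrite -d1_set3 // cc //; apply/eqP; rewrite card_set3.
Qed.

Lemma cohomologous_edge a b : cohomologous K a b -> exists l : V -> bool,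
  forall u w, u != w -> [set u; w] \in K -> b [set u; w] = a [set u; w] (+) l u (+) l w.
Proof.
case/existsP=> l /forallP cobl; exists l => u w uw uwK.
move: (cobl [set u; w]); rewrite uwK cards2 uw /= d0_set2 // -addbA => /eqP <-.
by rewrite addKb.
Qed.

Lemma cohomologous_cocycle a b : cocycle1 K a -> cohomologous K a b -> cocycle1 K b.
Proof.
move=> ca /cohomologous_edge[l abl] t tK t3.
have [[[x0 x1] x2] ox <-] := otri_exists scK brK tK t3.
have [xK x012 _ _] := otri_facts scK brK ox; have := cocycle_otri ca ox.
move: (x012); rewrite uniq3 => /and3P[d01 d02 d12].
rewrite d1_set3 // !abl ?(pair_in_complex scK xK) ?inE ?eqxx ?orbT //.
by case: (a _); case: (a _); case: (a _); case: (l _); case: (l _); case: (l _).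
Qed.

Definition oriented_cochain (h : V -> V -> bool) : cochain1 V := fun e =>
  [exists p : V * V, [&& e == [set p.1; p.2], p.1 != p.2, br p.1 p.2 & h p.1 p.2]].

Lemma oriented_cochainE h u v : u != v -> [set u; v] \in K -> br u v ->
  oriented_cochain h [set u; v] = h u v.
Proof.
move=> uv uvK buv; apply/existsP/idP => [[[p q]] /and4P[/eqP E pq bpq hpq]|huv]; last first.
  by exists (u, v); rewrite /= eqxx uv buv huv.
have : p \in [set u; v] by rewrite E !inE eqxx.
have : q \in [set u; v] by rewrite E !inE eqxx orbT.
case/set2P=> ?; case/set2P=> ?; subst => //; first by rewrite eqxx in pq.
- by move: bpq; rewrite (br_antisym brK uv uvK) buv.
- by rewrite eqxx in pq.
Qed.

Definition cup2 b c (x : V * V * V) : bool :=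
  let '(x0, x1, x2) := x in b [set x0; x1] && c [set x1; x2].

Definition int2 (z : {set V} -> bool) b c : bool :=
  \big[addb/false]_(x | otri K br x && z (triangle_of x)) cup2 b c x.

Section Cycle.
Variables (al2 : {set {set V}}) (al2_cycle : cycle2 K al2).

Lemma cycle2_d1 f : \big[addb/false]_(t in al2) d1 f t = false.
Proof.
rewrite /d1 (exchange_big_dep (fun e : {set V} => #|e| == 2)) /=; last by move=> t e _ /andP[].
apply: big1 => e e2; rewrite big_addb_const.
have -> : [set t | (t \in al2) && ((e \subset t) && (#|e| == 2))] = [set t in al2 | e \subset t].
  by apply/setP => t; rewrite !inE e2 andbT.
case: (boolP (e \in K)) => eK; first by rewrite (negbTE (al2_cycle.2 e eK (eqP e2))).
suff -> : [set t in al2 | e \subset t] = set0 by rewrite cards0.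
apply/setP=> t; rewrite !inE; apply/negP => /andP[/(al2_cycle.1 t) /andP[tK _] et].
by move: eK; rewrite (face_in_complex scK tK et) // -card_gt0 (eqP e2).
Qed.

Lemma cycle2_coboundary (h : V -> V -> bool) :
  \big[addb/false]_(x | otri K br x && (triangle_of x \in al2))
     (let '(x0, x1, x2) := x in h x0 x1 (+) h x0 x2 (+) h x1 x2) = false.
Proof.
transitivity (\big[addb/false]_(x | otri K br x && (triangle_of x \in al2))
                d1 (oriented_cochain h) (triangle_of x)).
  apply: eq_bigr => [[[x0 x1] x2]] /andP[ox _].
  have [_ x012 /and3P[b01 b12 b02] _] := otri_facts scK brK ox.
  have [e01 e02 e12] := otri_edges scK brK ox.
  move: (x012); rewrite uniq3 => /and3P[d01 d02 d12].
  by rewrite /= d1_set3 // !oriented_cochainE.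
rewrite (big_otri scK brK _ (fun t => t \in al2) (d1 (oriented_cochain h)))
  -[RHS](cycle2_d1 (oriented_cochain h)).
apply: eq_bigl => t; apply/and3P/idP => [[] //|tal2].
by have /andP[tK t3] := al2_cycle.1 t tal2.
Qed.

(* (b + dl) \cup c = b \cup c + d(l \cup c) when dc = 0, and the cycle al2 kills d(l \cup c). *)
Lemma int2_cohomologousl b b' c : cocycle1 K c -> cohomologous K b b' ->
  int2 [pred t in al2] b' c = int2 [pred t in al2] b c.
Proof.
move=> cc /cohomologous_edge[l bb'l].
rewrite -[RHS]addbF -(cycle2_coboundary (fun u v => l u && c [set u; v])) /int2 -big_split.
apply: eq_bigr => [[[x0 x1] x2]] /andP[ox _] /=.
have [_ + _ _] := otri_facts scK brK ox; rewrite uniq3 => /and3P[d01 _ _].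
have [e01 _ _] := otri_edges scK brK ox.
rewrite bb'l //; move: (cocycle_otri cc ox).
by case: (b _); case: (l x0); case: (l x1); case: (c _); case: (c _); case: (c _).
Qed.

Lemma int2_cohomologousr b c c' : cocycle1 K b -> cohomologous K c c' ->
  int2 [pred t in al2] b c' = int2 [pred t in al2] b c.
Proof.
move=> cb /cohomologous_edge[l cc'l].
rewrite -[RHS]addbF -(cycle2_coboundary (fun u v => b [set u; v] && l v)) /int2 -big_split.
apply: eq_bigr => [[[x0 x1] x2]] /andP[ox _] /=.
have [_ + _ _] := otri_facts scK brK ox; rewrite uniq3 => /and3P[_ _ d12].
have [_ _ e12] := otri_edges scK brK ox.
rewrite cc'l //; move: (cocycle_otri cb ox).
by case: (b _); case: (b _); case: (b _); case: (c _); case: (l x1); case: (l x2).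
Qed.

End Cycle.

Lemma int2_mkcond z b c :
  int2 z b c = \big[addb/false]_(x | otri K br x) (z (triangle_of x) && cup2 b c x).
Proof. by rewrite /int2 big_mkcondr. Qed.

Lemma int2_addb z1 z2 b c :
  int2 (fun t => z1 t (+) z2 t) b c = int2 z1 b c (+) int2 z2 b c.
Proof. by rewrite !int2_mkcond -big_split; apply: eq_bigr => x _; rewrite andb_addl. Qed.

Lemma eq_int2 z1 z2 b c : (forall t, t \in K -> #|t| = 3 -> z1 t = z2 t) ->
  int2 z1 b c = int2 z2 b c.
Proof.
move=> z12; apply: eq_bigl => -[[x0 x1] x2]; apply: andb_id2l => /and4P[tK /eqP t3 _ _].
exact: z12.
Qed.

Lemma int2_capM a b c : int2 (capM K br a) b c = int3 K br a b c.
Proof.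
rewrite int2_mkcond /capM; under eq_bigr => x _ do rewrite big_distrl.
rewrite exchange_big /int3; apply: eq_bigr => [[[[y0 y1] y2] y3]] _.
have [oy|noy] := boolP (otet K br (y0, y1, y2, y3)); last first.
  by rewrite big1 // => x _ /=; rewrite (negbTE noy).
have [o0 _ _ _] := otet_faces scK brK oy.
rewrite (bigD1 (y1, y2, y3)) //= big1 ?eqxx ?addbF // => x /andP[ox nx].
suff /negbTE-> : [set y1; y2; y3] != triangle_of x by [].
by apply: contra nx => /eqP E; apply/eqP; apply: (otri_inj scK brK ox o0); rewrite -E.
Qed.

(* d(b \cup c) = 0 on the tetrahedron [y0 y1 y2 y3]. *)
Lemma cup2_otet_boundary b c y0 y1 y2 y3 : cocycle1 K b -> cocycle1 K c ->
  otet K br (y0, y1, y2, y3) ->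
  \big[addb/false]_(x | otri K br x && (triangle_of x \subset [set y0; y1; y2; y3])) cup2 b c x
  = false.
Proof.
move=> cb cc oy; rewrite (eq_bigl _ _ (fun x => otri_sub_otet scK brK x oy)) -big_uniq /=.
  have [o0 _ _ o3] := otet_faces scK brK oy.
  move: (cocycle_otri cb o3) (cocycle_otri cc o0); rewrite !big_cons big_nil /=.
  by case: (b _); case: (b _); case: (b _); case: (c _); case: (c _); case: (c _).
have : uniq [:: y0; y1; y2; y3] by case/and5P: oy => _; rewrite card_set4.
rewrite /= !inE !negb_or andbT => /and3P[/and3P[d01 d02 d03] /andP[d12 d13] d23].
by rewrite !xpair_eqE (eq_sym y1) (negbTE d01) (eq_sym y2) (negbTE d12) (eq_sym y3)
  (negbTE d23) !andbF.
Qed.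

Lemma int2_bd3 (C : {set {set V}}) b c : cocycle1 K b -> cocycle1 K c ->
  int2 (bd3 K C) b c = false.
Proof.
move=> cb cc; rewrite int2_mkcond /bd3; under eq_bigr => x _ do rewrite -big_addb_const.
rewrite (exchange_big_dep (fun s : {set V} => [&& s \in C, s \in K & #|s| == 4])) /=; last first.
  by move=> x s _ /andP[-> /and3P[-> -> _]].
apply: big1 => s /and3P[sC sK /eqP s4].
have [[[[y0 y1] y2] y3] oy ys] := otet_exists scK brK sK s4.
rewrite -[RHS](cup2_otet_boundary cb cc oy) ys; apply: eq_bigl => x.
by rewrite sC sK s4 eqxx.
Qed.

Lemma int2_poincare_dual a1 al2 b c : poincare_dual K br a1 al2 ->
  cocycle1 K b -> cocycle1 K c -> int2 [pred t in al2] b c = int3 K br a1 b c.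
Proof.
move=> [_ [C dualC]] cb cc.
rewrite -int2_capM -[int2 (capM _ _ _) b c]addbF -(int2_bd3 C cb cc) -int2_addb.
by apply: eq_int2 => t tK t3; rewrite -dualC //= addbC addbK.
Qed.

Lemma int3_sum2 (I : finType) (P : pred I) a (bs : I -> cochain1 V) c :
  int3 K br a (fun e => \big[addb/false]_(l | P l) bs l e) c =
  \big[addb/false]_(l | P l) int3 K br a (bs l) c.
Proof.
rewrite /int3 exchange_big; apply: eq_bigr => -[[[y0 y1] y2] y3] _ /=.
by rewrite big_distrl !big_distrr.
Qed.

Lemma int3_sum3 (I : finType) (P : pred I) a b (cs : I -> cochain1 V) :
  int3 K br a b (fun e => \big[addb/false]_(l | P l) cs l e) =
  \big[addb/false]_(l | P l) int3 K br a b (cs l).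
Proof.
rewrite /int3 exchange_big; apply: eq_bigr => -[[[y0 y1] y2] y3] _ /=.
by rewrite !big_distrr.
Qed.

Lemma int3_lincomb n (beta : 'I_n -> cochain1 V) a (m m' : {ffun 'I_n -> bool}) :
  int3 K br a (lincomb beta m) (lincomb beta m') =
  \big[addb/false]_(p : 'I_n * 'I_n) (int3 K br a (beta p.1) (beta p.2) && (m p.1 && m' p.2)).
Proof.
rewrite /lincomb int3_sum2; under eq_bigr => l _ do rewrite int3_sum3.
by rewrite pair_big_dep big_mkcond; apply: eq_bigr => p _; rewrite [RHS]andbC.
Qed.

End Cochains.

Section ToricCode.
Local Open Scope ring_scope.
Variables (V : finType) (K : {set {set V}}) (br : rel V).
Implicit Types (psi : state K) (a : config K).

Lemma eq_sgn_mul (b : bool) (x : algC) : sgn b * x = x -> x != 0 -> b = false.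
Proof. by case: b => //; rewrite /sgn expr1 mulN1r => /eqP; rewrite eqNr => ->. Qed.

Lemma opprod_sgn (T : Type) (s : seq T) (F : T -> op K) (g : T -> config K -> bool) :
  (forall x psi a, F x psi a = sgn (g x a) * psi a) ->
  forall psi a, opprod s F psi a = sgn (\big[addb/false]_(x <- s) g x a) * psi a.
Proof.
move=> Fg psi a; elim: s => [|x s IH] /=; first by rewrite big_nil mul1r.
by rewrite Fg IH big_cons /sgn signr_addb mulrA.
Qed.

Lemma UprimeE al2 i j psi a :
  Uprime br al2 i j psi a = sgn (int2 K br [pred t in al2] (cv (a i)) (cv (a j))) * psi a.
Proof.
rewrite /Uprime (@opprod_sgn _ _ _ (fun x a => cup2 (cv (a i)) (cv (a j)) x)) => [|[[x0 x1] x2] //].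
by rewrite big_filter big_enum_cond; congr (sgn _ * _); apply: eq_bigl => -[[x0 x1] x2].
Qed.

Lemma logical_rhsE n (beta : 'I_n -> cochain1 V) (a1 : cochain1 V) i j psi a :
  logical_rhs br beta a1 i j psi a =
  sgn (\big[addb/false]_(p : 'I_n * 'I_n) (int3 K br a1 (beta p.1) (beta p.2) &&
        (Defs.coord K beta (cv (a i)) p.1 && Defs.coord K beta (cv (a j)) p.2))) * psi a.
Proof.
rewrite /logical_rhs (@opprod_sgn _ _ _ (fun p a => int3 K br a1 (beta p.1) (beta p.2) &&
        (Defs.coord K beta (cv (a i)) p.1 && Defs.coord K beta (cv (a j)) p.2))) ?big_enum //.
by move=> p psi' a'; case: (int3 _ _ _ _ _) => //=; rewrite mul1r.
Qed.

Lemma code_space_cocycle psi a k : code_space psi -> psi a != 0 -> cocycle1 K (cv (a k)).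
Proof. by move=> cs psia t tK t3; apply: eq_sgn_mul psia; apply: (cs k).2. Qed.

Lemma cv_flipv k k' v a e : e \in K -> #|e| == 2 ->
  cv (flipv k v a k') e = cv (a k') e (+) ((k' == k) && (v \in e)).
Proof.
move=> eK e2; rewrite /cv; case: insubP => [e' _ e'e|]; last by rewrite eK e2.
rewrite /flipv ffunE; case: eqVneq => [_ | _ /=]; last by rewrite addbF.
by rewrite ffunE e'e.
Qed.

Lemma flipv_cohomologous k k' v a : cohomologous K (cv (a k')) (cv (flipv k v a k')).
Proof.
apply/existsP; exists [ffun x => (k' == k) && (x == v)]; apply/forallP => e.
apply/implyP => /andP[eK e2]; rewrite cv_flipv // addKb /d0.
have [ve|ve] := boolP (v \in e).
  rewrite (bigD1 v) //= big1 ?ffunE ?eqxx ?addbF // => x /andP[_ xv].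
  by rewrite ffunE (negbTE xv) andbF.
rewrite andbF big1 // => x xe; rewrite ffunE.
by case: (eqVneq x v) xe ve => [-> ->|_ _ _]; rewrite ?andbF.
Qed.

Lemma coord_cohomologous n (beta : 'I_n -> cochain1 V) (b : cochain1 V) :
  cohom_basis K beta -> cocycle1 K b -> cohomologous K b (lincomb beta (Defs.coord K beta b)).
Proof.
case=> _ spanned _ cb; rewrite /Defs.coord; case: pickP => [m //|none].
by have [m] := spanned b cb; rewrite none.
Qed.

Lemma Uprime_Zstab al2 i j psi k t : code_space psi -> t \in K -> #|t| = 3 ->
  Zstab k t (Uprime br al2 i j psi) =1 Uprime br al2 i j psi.
Proof.
move=> cs tK t3 a; rewrite /Zstab !UprimeE mulrCA.
by have := (cs k).2 t tK t3 a; rewrite /Zstab => ->.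
Qed.

Hypotheses (scK : simplicial_complex K) (brK : branching K br).

Lemma Uprime_Xstab al2 i j psi k v : cycle2 K al2 -> code_space psi ->
  Xstab k v (Uprime br al2 i j psi) =1 Uprime br al2 i j psi.
Proof.
move=> cy cs a; have psiX : psi (flipv k v a) = psi a := (cs k).1 v a.
rewrite /Xstab !UprimeE psiX; have [->|psia] := eqVneq (psi a) 0; first by rewrite !mulr0.
have psia' : psi (flipv k v a) != 0 by rewrite psiX.
have [cj' ci] := (code_space_cocycle j cs psia', code_space_cocycle i cs psia).
rewrite (int2_cohomologousl scK brK cy cj' (flipv_cohomologous k i v a)).
by rewrite (int2_cohomologousr scK brK cy ci (flipv_cohomologous k j v a)).
Qed.

Lemma Uprime_logical n (beta : 'I_n -> cochain1 V) al2 (a1 : cochain1 V) i j psi :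
  cohom_basis K beta -> cycle2 K al2 -> poincare_dual K br a1 al2 -> code_space psi ->
  Uprime br al2 i j psi =1 logical_rhs br beta a1 i j psi.
Proof.
move=> basis cy dual cs a; rewrite UprimeE logical_rhsE.
have [->|psia] := eqVneq (psi a) 0; first by rewrite !mulr0.
have [ci cj] := (code_space_cocycle i cs psia, code_space_cocycle j cs psia).
have [hi hj] := (coord_cohomologous basis ci, coord_cohomologous basis cj).
have [ci' cj'] := (cohomologous_cocycle scK brK ci hi, cohomologous_cocycle scK brK cj hj).
rewrite -(int2_cohomologousl scK brK cy cj hi) -(int2_cohomologousr scK brK cy ci' hj).
by rewrite (int2_poincare_dual scK brK dual ci' cj') int3_lincomb.
Qed.

End ToricCode.

Theorem mainTheorem3 (V : finType) (K : {set {set V}}) (br : rel V)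
  (n : nat) (beta : 'I_n -> cochain1 V)
  (al2 : {set {set V}}) (a1 : cochain1 V) (i j : 'I_3) :
  closed_3manifold K -> branching K br -> cohom_basis K beta ->
  cycle2 K al2 -> poincare_dual K br a1 al2 -> i != j ->
  (forall psi : state K, code_space psi -> code_space (Uprime br al2 i j psi)) /\
  (forall psi : state K, code_space psi ->
     Uprime br al2 i j psi =1 logical_rhs br beta a1 i j psi).
Proof.
move=> /and4P[scK _ _ _] brK basis cy dual _; split=> psi cs.
  by move=> k; split=> [v | t tK t3]; [apply: Uprime_Xstab | apply: Uprime_Zstab].
exact: Uprime_logical.
Qed.
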